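(* Let $\Omega\subset\mathbb{R}^n$ be a bounded open convex set with smooth boundary, let $\Lambda>0$, and let $u$ be a nonconstant continuous viscosity solution of $(N_\Lambda)$. Let $\Omega_1\subset\Omega$ be an open connected set and $m>0$ a constant such that $u\ge m$ on $\overline{\Omega_1}$. Then $u>m$ in $\Omega_1$.
   Context: $\nu$ denotes the outer unit normal to $\partial\Omega$, and $\Delta_\infty u=\sum_{i,j=1}^n u_{x_i}u_{x_ix_j}u_{x_j}$. For $\Lambda\ge 0$, problem $(N_\Lambda)$ is $$\min\{|\nabla u|-\Lambda|u|,-\Delta_\infty u\}=0 \text{ in }\{u>0\}\cap\Omega,\quad \max\{\Lambda|u|-|\nabla u|,-\Delta_\infty u\}=0 \text{ in }\{u<0\}\cap\Omega,\quad -\Delta_\infty u=0 \text{ in }\{u=0\}\cap\Omega,\quad \tfrac{\partial u}{\partial\nu}=0 \text{ on }\partial\Omega,$$ understood in the viscosity sense as follows. For $s\in\mathbb{R}$, $\xi\in\mathbb{R}^n$, $X$ a symmetric $n\times n$ matrix, let $F(s,\xi,X)=\min\{|\xi|-\Lambda|s|,-\langle X\xi,\xi\rangle\}$, $G(s,\xi,X)=\max\{\Lambda|s|-|\xi|,-\langle X\xi,\xi\rangle\}$, $H(X)=-\langle X\xi,\xi\rangle$ (evaluated at the same $\xi$). For a function $u$ and point $x_0$, let $E$ denote $F$ if $u(x_0)>0$, $G$ if $u(x_0)<0$, $H$ if $u(x_0)=0$. An upper semicontinuous $u$ on $\overline\Omega$ is a viscosity subsolution if: for every $x_0\in\Omega$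 and $\phi\in C^2(\Omega)$ with $\phi(x_0)=u(x_0)$ and $u(x)<\phi(x)$ for $x\neq x_0$, one has $E(\phi(x_0),\nabla\phi(x_0),\nabla^2\phi(x_0))\le 0$; and for every $x_0\in\partial\Omega$ and $\phi\in C^2(\overline\Omega)$ with the same touching property, $\min\{E(\phi(x_0),\nabla\phi(x_0),\nabla^2\phi(x_0)),\frac{\partial\phi}{\partial\nu}(x_0)\}\le 0$. A lower semicontinuous $u$ is a viscosity supersolution if the same holds with $u(x)>\phi(x)$ for $x\ne x_0$, with ''$E\le 0$'' replaced by ''$E\ge 0$'' at interior points and with $\max\{E(\phi(x_0),\nabla\phi(x_0),\nabla^2\phi(x_0)),\frac{\partial\phi}{\partial\nu}(x_0)\}\ge 0$ at boundary points. A continuous $u$ is a viscosity solution if it is both a sub- and a supersolution. *)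

From mathcomp Require Import all_boot.
From Stdlib Require Import Reals.
Open Scope R_scope.

Definition pt (n : nat) := 'I_n -> R.

Definition vadd {n} (x y : pt n) : pt n := fun i => x i + y i.
Definition vsub {n} (x y : pt n) : pt n := fun i => x i - y i.
Definition vscale {n} (t : R) (x : pt n) : pt n := fun i => t * x i.
Definition ebasis {n} (i : 'I_n) : pt n := fun j => if i == j then 1 else 0.
Definition dot {n} (x y : pt n) : R := \big[Rplus/0]_(i < n) (x i * y i).
Definition vnorm {n} (x : pt n) : R := sqrt (dot x x).
Definition dist {n} (x y : pt n) : R := vnorm (vsub x y).

Definition quad {n} (X : 'I_n -> 'I_n -> R) (xi : pt n) : R :=
  \big[Rplus/0]_(i < n) \big[Rplus/0]_(j < n) (X i j * xi i * xi j).

Definition is_open_n {n} (U : pt n -> Prop) : Prop :=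
  forall x, U x -> exists r, 0 < r /\ forall y, dist y x < r -> U y.
Definition closure_n {n} (U : pt n -> Prop) (x : pt n) : Prop :=
  forall eps, 0 < eps -> exists y, U y /\ dist y x < eps.
Definition boundary_n {n} (U : pt n -> Prop) (x : pt n) : Prop :=
  closure_n U x /\ ~ U x.
Definition bounded_n {n} (U : pt n -> Prop) : Prop :=
  exists M, forall x, U x -> vnorm x <= M.
Definition convex_n {n} (U : pt n -> Prop) : Prop :=
  forall x y t, U x -> U y -> 0 <= t <= 1 ->
    U (vadd (vscale (1 - t) x) (vscale t y)).
Definition connected_n {n} (U : pt n -> Prop) : Prop :=
  forall A B : pt n -> Prop, is_open_n A -> is_open_n B ->
    (forall x, U x -> A x \/ B x) ->
    (forall x, ~ (U x /\ A x /\ B x)) ->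
    (forall x, U x -> A x) \/ (forall x, U x -> B x).

Definition cont_at {n} (f : pt n -> R) (x : pt n) : Prop :=
  forall eps, 0 < eps -> exists d, 0 < d /\
    forall y, dist y x < d -> Rabs (f y - f x) < eps.
Definition cont_on_rel {n} (S : pt n -> Prop) (f : pt n -> R) : Prop :=
  forall x, S x -> forall eps, 0 < eps -> exists d, 0 < d /\
    forall y, S y -> dist y x < d -> Rabs (f y - f x) < eps.

Definition has_partial {n} (f : pt n -> R) (i : 'I_n) (x : pt n) (l : R) : Prop :=
  derivable_pt_lim (fun t => f (vadd x (vscale t (ebasis i)))) 0 l.

Definition C2_on {n} (U : pt n -> Prop) (f : pt n -> R)
    (Df : pt n -> pt n) (D2f : pt n -> 'I_n -> 'I_n -> R) : Prop :=
  (forall x, U x -> forall i, has_partial f i x (Df x i)) /\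
  (forall x, U x -> forall i j, has_partial (fun y => Df y i) j x (D2f x i j)) /\
  (forall x, U x -> cont_at f x) /\
  (forall x, U x -> forall i, cont_at (fun y => Df y i) x) /\
  (forall x, U x -> forall i j, cont_at (fun y => D2f y i j) x).

Fixpoint Ck {n} (k : nat) (f : pt n -> R) : Prop :=
  match k with
  | O => forall x, cont_at f x
  | S k' => (forall x, cont_at f x) /\
      forall i : 'I_n, exists g : pt n -> R,
        (forall x, has_partial f i x (g x)) /\ Ck k' g
  end.
Definition smooth {n} (f : pt n -> R) : Prop := forall k, Ck k f.

(* Omega has smooth boundary_n, described by a global smooth defining function
   rho with Omega = {rho < 0} and nonvanishing gradient Drho on the boundary_n *)
Definition defining_function {n} (Omega : pt n -> Prop)
    (rho : pt n -> R) (Drho : pt n -> pt n) : Prop :=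
  smooth rho /\
  (forall x i, has_partial rho i x (Drho x i)) /\
  (forall x, Omega x <-> rho x < 0) /\
  (forall x, boundary_n Omega x -> vnorm (Drho x) <> 0).

Definition outer_normal {n} (Drho : pt n -> pt n) (x : pt n) : pt n :=
  vscale (/ vnorm (Drho x)) (Drho x).

Definition Fop {n} (Lam s : R) (xi : pt n) X : R :=
  Rmin (vnorm xi - Lam * Rabs s) (- quad X xi).
Definition Gop {n} (Lam s : R) (xi : pt n) X : R :=
  Rmax (Lam * Rabs s - vnorm xi) (- quad X xi).
Definition Hop {n} (xi : pt n) X : R := - quad X xi.

Definition Eop {n} (Lam ux0 s : R) (xi : pt n) X : R :=
  match Rlt_dec 0 ux0 with
  | left _ => Fop Lam s xi X
  | right _ => match Rlt_dec ux0 0 with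
               | left _ => Gop Lam s xi X
               | right _ => Hop xi X
               end
  end.

Definition viscosity_solution {n} (Omega : pt n -> Prop) (nu : pt n -> pt n)
    (Lam : R) (u : pt n -> R) : Prop :=
  cont_on_rel (closure_n Omega) u /\
  (forall x0 phi Dphi D2phi, Omega x0 -> C2_on Omega phi Dphi D2phi ->
     phi x0 = u x0 -> (forall x, Omega x -> x <> x0 -> u x < phi x) ->
     Eop Lam (u x0) (phi x0) (Dphi x0) (D2phi x0) <= 0) /\
  (forall x0 U phi Dphi D2phi, boundary_n Omega x0 -> is_open_n U ->
     (forall x, closure_n Omega x -> U x) -> C2_on U phi Dphi D2phi ->
     phi x0 = u x0 -> (forall x, closure_n Omega x -> x <> x0 -> u x < phi x) ->
     Rmin (Eop Lam (u x0) (phi x0) (Dphi x0) (D2phi x0))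
          (dot (Dphi x0) (nu x0)) <= 0) /\
  (forall x0 phi Dphi D2phi, Omega x0 -> C2_on Omega phi Dphi D2phi ->
     phi x0 = u x0 -> (forall x, Omega x -> x <> x0 -> u x > phi x) ->
     Eop Lam (u x0) (phi x0) (Dphi x0) (D2phi x0) >= 0) /\
  (forall x0 U phi Dphi D2phi, boundary_n Omega x0 -> is_open_n U ->
     (forall x, closure_n Omega x -> U x) -> C2_on U phi Dphi D2phi ->
     phi x0 = u x0 -> (forall x, closure_n Omega x -> x <> x0 -> u x > phi x) ->
     Rmax (Eop Lam (u x0) (phi x0) (Dphi x0) (D2phi x0))
          (dot (Dphi x0) (nu x0)) >= 0).

(* At a point x0 of Omega1 with u x0 = m > 0, u attains a
   local minimum, so the paraboloid m - K |y - x0|^2 touches u from below at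
   x0; since u is continuous on the compact closure of Omega it is bounded
   below, and K can be taken so large that the touching is global.  The test
   function has zero gradient at x0, so the operator F there is at most
   -Lam m < 0, contradicting the supersolution inequality F >= 0. *)

From HB Require Import structures.
From Pilot Require Import Defs.
From mathcomp Require Import all_boot zify.
From Stdlib Require Import Reals Lra Classical ClassicalEpsilon FunctionalExtensionality.
From Coquelicot Require Coquelicot.
Open Scope R_scope.

HB.instance Definition _ := Monoid.isComLaw.Build R 0 Rplus
  (fun a b c => esym (Rplus_assoc a b c)) Rplus_comm Rplus_0_l.

Lemma sumR_ge0 n (F : 'I_n -> R) : (forall i, 0 <= F i) -> 0 <= \big[Rplus/0]_(i < n) F i.
Proof. by move=> F0; apply: (big_ind (fun a => 0 <= a)) => //; [lra | move=> *; lra]. Qed.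

Lemma dot_ge0 {n} (w : pt n) : 0 <= dot w w.
Proof. by apply: sumR_ge0 => i; apply: Rle_0_sqr. Qed.

Lemma sqr_coord_le_dot {n} (w : pt n) i : w i * w i <= dot w w.
Proof.
rewrite /dot (bigD1 i) //= -{1}(Rplus_0_r (w i * w i)); apply: Rplus_le_compat_l.
by apply: (big_ind (fun a => 0 <= a)) => //; [lra | move=> *; lra | move=> *; apply: Rle_0_sqr].
Qed.

Lemma sqr_vnorm {n} (w : pt n) : vnorm w * vnorm w = dot w w.
Proof. by rewrite /vnorm sqrt_sqrt //; apply: dot_ge0. Qed.

Lemma Rabs_coord_le_vnorm {n} (w : pt n) i : Rabs (w i) <= vnorm w.
Proof.
rewrite /vnorm -sqrt_Rsqr_abs; apply: sqrt_le_1_alt.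
exact: sqr_coord_le_dot.
Qed.

Lemma vnorm_lt {n} (w : pt n) e : 0 < e -> dot w w < e * e -> vnorm w < e.
Proof.
move=> e0 we; rewrite /vnorm -(sqrt_square e); last lra.
by apply: sqrt_lt_1_alt; split => //; apply: dot_ge0.
Qed.

Lemma vnorm_coord0 {n} (w : pt n) : (forall i, w i = 0) -> vnorm w = 0.
Proof. by move=> w0; rewrite /vnorm /dot big1 ?sqrt_0 // => i _; rewrite w0; lra. Qed.

Lemma dot_gt0 {n} (w : pt n) i : w i <> 0 -> 0 < dot w w.
Proof. by move=> wi0; have := sqr_coord_le_dot w i; have := Rsqr_pos_lt _ wi0; rewrite /Rsqr; lra. Qed.

Lemma dist_refl {n} (x : pt n) : Defs.dist x x = 0.
Proof. by apply: vnorm_coord0 => i; rewrite /vsub; lra. Qed.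

Lemma closure_n_of {n} (U : pt n -> Prop) x : U x -> closure_n U x.
Proof. by move=> Ux eps e0; exists x; split=> //; rewrite dist_refl; lra. Qed.

Lemma cont_at_plus {n} (f g : pt n -> R) x :
  cont_at f x -> cont_at g x -> cont_at (fun y => f y + g y) x.
Proof.
move=> cf cg eps e0.
have [d1 [d1_0 hf]] := cf (eps / 2) ltac:(lra).
have [d2 [d2_0 hg]] := cg (eps / 2) ltac:(lra).
exists (Rmin d1 d2); split; first exact: Rmin_glb_lt.
move=> y xy; have := hf y (Rlt_le_trans _ _ _ xy (Rmin_l _ _)).
have := hg y (Rlt_le_trans _ _ _ xy (Rmin_r _ _)).
have := Rabs_triang (f y - f x) (g y - g x).
have -> : f y - f x + (g y - g x) = f y + g y - (f x + g x) by ring.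
lra.
Qed.

Lemma cont_at_comp {n} (h : R -> R) (f : pt n -> R) x :
  continuity_pt h (f x) -> cont_at f x -> cont_at (fun y => h (f y)) x.
Proof.
move=> ch cf eps e0.
have [a [a0 ha]] := ch eps e0.
have [d [d0 hd]] := cf a a0.
exists d; split => // y xy.
case: (Req_dec (f y) (f x)) => [-> | fyx]; first by rewrite Rminus_diag Rabs_R0.
exact: (ha (f y) (conj (conj I (not_eq_sym fyx)) (hd y xy))).
Qed.

Lemma cont_at_coord {n} (i : 'I_n) x : cont_at (fun y => y i) x.
Proof.
move=> eps e0; exists eps; split => // y xy.
exact: Rle_lt_trans (Rabs_coord_le_vnorm (vsub y x) i) xy.
Qed.

Lemma cont_at_const {n} (c : R) (x : pt n) : cont_at (fun _ => c) x.
Proof. by move=> eps e0; exists 1; split => [|y _]; [lra | rewrite Rminus_diag Rabs_R0]. Qed.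

Lemma cont_at_ext {n} (f g : pt n -> R) x :
  (forall y, f y = g y) -> cont_at f x -> cont_at g x.
Proof. by move=> fg; rewrite (functional_extensionality f g fg). Qed.

Lemma cont_at_sum {n} (I : Type) (r : seq I) (P : pred I) (F : I -> pt n -> R) x :
  (forall i, cont_at (F i) x) -> cont_at (fun y => \big[Rplus/0]_(i <- r | P i) F i y) x.
Proof.
move=> cF; elim: r => [|a r IH].
  by apply: (cont_at_ext (fun _ => 0)) => [y|]; [rewrite big_nil | apply: cont_at_const].
case Pa: (P a); last by apply: (cont_at_ext _ _ _ _ IH) => y; rewrite big_cons Pa.
apply: (cont_at_ext (fun y => F a y + \big[Rplus/0]_(i <- r | P i) F i y)).
  by move=> y; rewrite big_cons Pa.
exact: cont_at_plus.
Qed.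

Section OneVariableDerivatives.
Import Coquelicot.Coquelicot.

Lemma derivable_pt_lim_quadratic c K q a :
  derivable_pt_lim (fun t => c - K * (q + (2 * t * a + t * t))) 0 (- (2 * K) * a).
Proof. apply is_derive_Reals; auto_derive; [done | ring]. Qed.

Lemma derivable_pt_lim_affine c a b :
  derivable_pt_lim (fun t => c * (a + t * b)) 0 (c * b).
Proof. apply is_derive_Reals; auto_derive; [done | ring]. Qed.

End OneVariableDerivatives.

Definition paraboloid {n} (c K : R) (x0 y : pt n) : R :=
  c - K * dot (vsub y x0) (vsub y x0).

Lemma dot_add_basis {n} (w : pt n) i t :
  dot (vadd w (vscale t (ebasis i))) (vadd w (vscale t (ebasis i)))
  = dot w w + (2 * t * w i + t * t).
Proof.
rewrite /dot (bigD1 i) //= [in RHS](bigD1 i) //=.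
rewrite (eq_bigr (fun j => w j * w j)); last first.
  by move=> j /negbTE ji; rewrite /vadd /vscale /ebasis eq_sym ji; ring.
by rewrite /vadd /vscale /ebasis eqxx; ring.
Qed.

Lemma has_partial_paraboloid {n} c K (x0 x : pt n) i :
  has_partial (paraboloid c K x0) i x (- (2 * K) * (x i - x0 i)).
Proof.
rewrite /has_partial /paraboloid.
have -> : (fun t => c - K * dot (vsub (vadd x (vscale t (ebasis i))) x0)
                                (vsub (vadd x (vscale t (ebasis i))) x0))
        = (fun t => c - K * (dot (vsub x x0) (vsub x x0) + (2 * t * vsub x x0 i + t * t))).
  apply: functional_extensionality => t; rewrite -dot_add_basis.
  have -> // : vsub (vadd x (vscale t (ebasis i))) x0 = vadd (vsub x x0) (vscale t (ebasis i)).
  by apply: functional_extensionality => j; rewrite /vsub /vadd; ring.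
exact: derivable_pt_lim_quadratic.
Qed.

Lemma has_partial_affine {n} (a : R) (x0 x : pt n) i j :
  has_partial (fun y => a * (y i - x0 i)) j x (a * ebasis j i).
Proof.
rewrite /has_partial.
have -> : (fun t => a * (vadd x (vscale t (ebasis j)) i - x0 i))
        = (fun t => a * ((x i - x0 i) + t * ebasis j i)).
  by apply: functional_extensionality => t; rewrite /vadd /vscale; ring.
exact: derivable_pt_lim_affine.
Qed.

Lemma cont_at_paraboloid {n} c K (x0 x : pt n) : cont_at (paraboloid c K x0) x.
Proof.
apply: (cont_at_comp (fun s => c - K * s)); first by reg.
apply: cont_at_sum => i.
by apply: (cont_at_comp (fun t => (t - x0 i) * (t - x0 i))); [reg | apply: cont_at_coord].
Qed.

Lemma C2_on_paraboloid {n} (U : pt n -> Prop) c K x0 :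
  C2_on U (paraboloid c K x0) (fun y i => - (2 * K) * (y i - x0 i))
          (fun _ i j => - (2 * K) * ebasis j i).
Proof.
split; [|split; [|split; [|split]]] => x _.
- exact: has_partial_paraboloid.
- exact: has_partial_affine.
- exact: cont_at_paraboloid.
- by move=> i; apply: (cont_at_comp (fun t => - (2 * K) * (t - x0 i))); [reg | apply: cont_at_coord].
- by move=> i j; apply: cont_at_const.
Qed.

Lemma Un_cv_subseq (u : nat -> R) l (phi : nat -> nat) :
  (forall j, (j <= phi j)%nat) -> Un_cv u l -> Un_cv (fun j => u (phi j)) l.
Proof.
move=> phi_ge cv eps e0; have [N HN] := cv eps e0; exists N => j jN.
by apply: HN; have := phi_ge j; rewrite /ge in jN *; lia.
Qed.

Lemma ValAdh_subseq (un : nat -> R) l : ValAdh un l ->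
  exists phi : nat -> nat, (forall j, (j <= phi j)%nat) /\ Un_cv (fun j => un (phi j)) l.
Proof.
move=> adh.
have near_l j : exists p, (j <= p)%nat /\ Rabs (un p - l) < / INR j.+1.
  have e0 : 0 < / INR j.+1 by apply: Rinv_0_lt_compat; apply: lt_0_INR; lia.
  have [p [jp hp]] := adh (disc l (mkposreal _ e0)) j (ex_intro _ (mkposreal _ e0) (fun y h => h)).
  by exists p; split => //; apply/leP.
have [phi hphi] := choice _ near_l.
exists phi; split => [j | eps e0]; first by have [] := hphi j.
have [N [N_eps N_gt0]] := archimed_cor1 eps e0.
exists N => j jN; rewrite /R_dist; have [_ close] := hphi j.
apply: Rlt_trans close (Rle_lt_trans _ _ _ _ N_eps).
apply: Rinv_le_contravar; first exact: lt_0_INR.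
by apply: le_INR; rewrite /ge in jN; lia.
Qed.

Lemma bounded_seq_subseq_cv (un : nat -> R) M : (forall j, Rabs (un j) <= M) ->
  exists (phi : nat -> nat) l, (forall j, (j <= phi j)%nat) /\ Un_cv (fun j => un (phi j)) l.
Proof.
move=> unM.
have unM' j : -M <= un j <= M.
  by have := Rle_abs (un j); have := Rle_abs (- un j); rewrite Rabs_Ropp; have := unM j; lra.
have [l adh] := Bolzano_Weierstrass un _ (compact_P3 (-M) M) unM'.
by have [phi ?] := ValAdh_subseq un l adh; exists phi, l.
Qed.

Lemma bounded_seq_subseq_cv_n {n} (x : nat -> pt n) M : (forall j i, Rabs (x j i) <= M) ->
  exists (phi : nat -> nat) (l : pt n), (forall j, (j <= phi j)%nat) /\
    forall i, Un_cv (fun j => x (phi j) i) (l i).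
Proof.
move=> xM.
suff first_coords k : exists (phi : nat -> nat) (l : pt n), (forall j, (j <= phi j)%nat) /\
    forall i : 'I_n, (i < k)%nat -> Un_cv (fun j => x (phi j) i) (l i).
  by have [phi [l [phi_ge cv]]] := first_coords n; exists phi, l; split => // i; apply: cv.
elim: k => [|k [phi [l [phi_ge cv]]]]; first by exists (fun j => j), (fun _ => 0).
case: (ltnP k n) => kn; last first.
  by exists phi, l; split => // i ik; apply: cv; have := ltn_ord i; lia.
have [psi [lk [psi_ge cvk]]] := bounded_seq_subseq_cv (fun j => x (phi j) (Ordinal kn)) M (fun j => xM _ _).
exists (fun j => phi (psi j)), (fun i => if nat_of_ord i == k then lk else l i); split.
  by move=> j; have := phi_ge (psi j); have := psi_ge j; lia.
move=> i ik; case: eqP => [ik_eq | ik_neq].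
  by have -> : i = Ordinal kn by apply: val_inj; rewrite /= ik_eq.
by apply: (Un_cv_subseq (fun j => x (phi j) i)) => //; apply: cv; lia.
Qed.

Lemma Un_cv_sum0 (I : Type) (r : seq I) (P : pred I) (F : I -> nat -> R) :
  (forall i, Un_cv (F i) 0) -> Un_cv (fun j => \big[Rplus/0]_(i <- r | P i) F i j) 0.
Proof.
move=> cvF; elim: r => [|a r IH].
  by move=> eps e0; exists O => j _; rewrite big_nil /R_dist Rminus_0_r Rabs_R0.
have := CV_plus _ _ _ _ (cvF a) IH; rewrite Rplus_0_r => cv_cons.
by case Pa: (P a) => eps e0; [have [N HN] := cv_cons eps e0 | have [N HN] := IH eps e0];
  exists N => j jN; rewrite big_cons Pa; apply: HN.
Qed.

Lemma bounded_seq_cluster {n} (S : pt n -> Prop) (x : nat -> pt n) :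
  bounded_n S -> (forall j, S (x j)) ->
  exists (phi : nat -> nat) (l : pt n), (forall j, (j <= phi j)%nat) /\
    forall eps, 0 < eps -> exists N, forall j, (N <= j)%nat -> Defs.dist (x (phi j)) l < eps.
Proof.
move=> [M SM] Sx.
have xM j i : Rabs (x j i) <= M by apply: Rle_trans (Rabs_coord_le_vnorm _ i) (SM _ (Sx j)).
have [phi [l [phi_ge cv]]] := bounded_seq_subseq_cv_n x M xM.
exists phi, l; split => // eps e0.
have cv_dot : Un_cv (fun j => dot (vsub (x (phi j)) l) (vsub (x (phi j)) l)) 0.
  apply: (Un_cv_sum0 _ _ _ (fun i j => (x (phi j) i - l i) * (x (phi j) i - l i))) => i.
  have cv0 : Un_cv (fun j => x (phi j) i - l i) 0.
    by move=> e e_pos; have [N HN] := cv i e e_pos; exists N => j jN; rewrite /R_dist Rminus_0_r; apply: HN.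
  by have := CV_mult _ _ _ _ cv0 cv0; rewrite Rmult_0_l.
have [N HN] := cv_dot (eps * eps) ltac:(nra).
exists N => j jN; apply: vnorm_lt => //.
have := HN j ltac:(rewrite /ge; lia); rewrite /R_dist Rminus_0_r Rabs_pos_eq //.
exact: dot_ge0.
Qed.

Lemma cont_on_closure_bounded_below {n} (Omega : pt n -> Prop) (u : pt n -> R) :
  bounded_n Omega -> cont_on_rel (closure_n Omega) u ->
  exists L, forall x, Omega x -> L <= u x.
Proof.
move=> bdd cont; apply: NNPP => unbounded.
have low k : exists x, Omega x /\ u x < - INR k.
  apply: NNPP => none; apply: unbounded; exists (- INR k) => x Ox.
  by apply: Rnot_lt_le => ux; apply: none; exists x.
have [x x_low] := choice _ low.
have [phi [l [phi_ge cv]]] := bounded_seq_cluster Omega x bdd (fun j => proj1 (x_low j)).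
have cl_l : closure_n Omega l.
  by move=> eps e0; have [N HN] := cv eps e0; exists (x (phi N)); split; [apply: (x_low _).1 | apply: HN].
have [d [d0 cont_l]] := cont l cl_l 1 Rlt_0_1.
have [N HN] := cv d d0.
have [K K_big] := INR_unbounded (1 - u l).
pose j := maxn N K.
have near_l := cont_l _ (closure_n_of _ _ (x_low (phi j)).1) (HN j (leq_maxl _ _)).
have K_le : INR K <= INR (phi j) by apply: le_INR; have := phi_ge j; have := leq_maxr N K; lia.
have := (x_low (phi j)).2; have := Rle_abs (- (u (x (phi j)) - u l)); rewrite Rabs_Ropp.
lra.
Qed.

Lemma paraboloid_vertex {n} c K (x0 : pt n) : paraboloid c K x0 x0 = c.
Proof. by rewrite /paraboloid /dot big1 => [|i _]; rewrite /vsub; ring. Qed.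

Lemma paraboloid_lt_vertex {n} c K (x0 y : pt n) : 0 < K -> y <> x0 -> paraboloid c K x0 y < c.
Proof.
move=> K0 yx0.
have [i yi] : exists i, y i <> x0 i.
  apply: NNPP => same; apply: yx0; apply: functional_extensionality => i.
  by apply: NNPP => yi; apply: same; exists i.
have := dot_gt0 (vsub y x0) i ltac:(rewrite /vsub; lra).
by rewrite /paraboloid; nra.
Qed.

Lemma paraboloid_le_far {n} c K r (x0 y : pt n) :
  0 <= K -> 0 <= r -> r <= Defs.dist y x0 -> paraboloid c K x0 y <= c - K * (r * r).
Proof.
move=> K0 r0 far; rewrite /paraboloid -sqr_vnorm.
have : r * r <= Defs.dist y x0 * Defs.dist y x0 by nra.
rewrite /Defs.dist; nra.
Qed.

Definition interior_supersolution {n} (Omega : pt n -> Prop) (Lam : R) (u : pt n -> R) : Prop :=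
  forall x0 phi Dphi D2phi, Omega x0 -> C2_on Omega phi Dphi D2phi ->
    phi x0 = u x0 -> (forall x, Omega x -> x <> x0 -> u x > phi x) ->
    Eop Lam (u x0) (phi x0) (Dphi x0) (D2phi x0) >= 0.

Lemma viscosity_solution_interior_supersolution {n} (Omega : pt n -> Prop) nu Lam u :
  viscosity_solution Omega nu Lam u -> interior_supersolution Omega Lam u.
Proof. by case=> [_ [_ [_ [super _]]]]. Qed.

Lemma Fop_flat_lt0 {n} Lam s (xi : pt n) X :
  0 < Lam -> 0 < s -> (forall i, xi i = 0) -> Fop Lam s xi X < 0.
Proof.
move=> Lam0 s0 xi0; rewrite /Fop vnorm_coord0 // Rabs_pos_eq; last lra.
by have := Rmin_l (0 - Lam * s) (- quad X xi); have := Rmult_lt_0_compat _ _ Lam0 s0; lra.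
Qed.

Lemma supersolution_no_positive_local_min {n} (Omega : pt n -> Prop) Lam u x0 r L :
  interior_supersolution Omega Lam u -> 0 < Lam ->
  (forall x, Omega x -> L <= u x) -> Omega x0 -> 0 < u x0 -> 0 < r ->
  (forall y, Omega y -> Defs.dist y x0 < r -> u x0 <= u y) -> False.
Proof.
move=> super Lam0 u_ge_L Ox0 ux0 r0 local_min.
(* K r^2 exceeds u x0 - L, which makes the touching global. *)
pose K := (u x0 - L + 1) / (r * r).
have L_le : L <= u x0 by apply: u_ge_L.
have K0 : 0 < K by apply: Rdiv_lt_0_compat; nra.
have Kr : K * (r * r) = u x0 - L + 1 by rewrite /K; field; lra.
have touch y : Omega y -> y <> x0 -> u y > paraboloid (u x0) K x0 y.
  move=> Oy yx0; case: (Rlt_or_le (Defs.dist y x0) r) => [near | far].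
    by have := local_min y Oy near; have := paraboloid_lt_vertex (u x0) K x0 y K0 yx0; lra.
  by have := paraboloid_le_far (u x0) K r x0 y (Rlt_le _ _ K0) (Rlt_le _ _ r0) far; have := u_ge_L y Oy; lra.
have := super x0 _ _ _ Ox0 (C2_on_paraboloid Omega (u x0) K x0) (paraboloid_vertex _ _ _) touch.
rewrite paraboloid_vertex /Eop; case: Rlt_dec => [_ | ]; last lra.
have flat i : - (2 * K) * (x0 i - x0 i) = 0 by ring.
by have := Fop_flat_lt0 Lam (u x0) _ (fun i j => - (2 * K) * ebasis j i) Lam0 ux0 flat; lra.
Qed.

Theorem lemma3 (n : nat) (Omega : pt n -> Prop) (rho : pt n -> R)
  (Drho : pt n -> pt n) (Lam : R) (u : pt n -> R)
  (Omega1 : pt n -> Prop) (m : R) :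
  is_open_n Omega -> bounded_n Omega -> convex_n Omega ->
  defining_function Omega rho Drho ->
  0 < Lam ->
  viscosity_solution Omega (outer_normal Drho) Lam u ->
  (exists x y, closure_n Omega x /\ closure_n Omega y /\ u x <> u y) ->
  is_open_n Omega1 -> connected_n Omega1 -> (forall x, Omega1 x -> Omega x) ->
  0 < m ->
  (forall x, closure_n Omega1 x -> m <= u x) ->
  forall x, Omega1 x -> m < u x.
Proof.
move=> _ bdd _ _ Lam0 sol _ open1 _ sub1 m0 u_ge x0 x0_in.
apply: Rnot_le_lt => u_le.
have ux0 : u x0 = m by have := u_ge x0 (closure_n_of _ _ x0_in); lra.
have [r [r0 ball]] := open1 x0 x0_in.
have [L u_ge_L] := cont_on_closure_bounded_below Omega u bdd sol.1.
apply: (supersolution_no_positive_local_min Omega Lam u x0 r L) => //.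
- exact: viscosity_solution_interior_supersolution sol.
- exact: sub1.
- lra.
- by move=> y _ near; rewrite ux0; apply/u_ge/closure_n_of/ball.
Qed.
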